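(* Let $s,t,q,N$ be integers with $0\le s<q$, $1\le t<q$, $N\ge0$, $t\nmid q$ and $\gcd(t,q)=1$. Write $q=\overline qt+\widehat q$ ($1\le\widehat q<t$), $s=\overline st+\widehat s$ ($0\le\widehat s<t$). Let $S^+(s,t,q,N)=\sum_{k=0}^N\lfloor(s+kt)/q\rfloor$, $M=\lfloor(s+Nt)/q\rfloor$, $x_M=(Mq-s)/t$ and $S=\overline q\frac{(M-1)M}2+M(N-\lceil x_M\rceil+1)$. Let $H=\{k\in\mathbb N:(\widehat s-k\widehat q)\bmod t<\widehat q\}$ (the hS-type indices), $J=H\cap\{0,\dots,t-1\}=\{j_0<j_1<\dots<j_{\widehat q-1}\}$, and for a finite set $K$ let $S_K=\sum_{k\in K}k$. Then: (a) if $j_0\ge M$, $S^+(s,t,q,N)=S$; (b.1) if $j_0<M\le j_{\widehat q-1}$, then $S^+(s,t,q,N)=S+S_K$ with $K=H\cap\{0,\dots,M-1\}$; (b.2) if $j_{\widehat q-1}<M$ and $j_0+t\ge M$, then $S^+(s,t,q,N)=S+S_J$; (b.3) if $j_{\widehat q-1}<M$ and $j_0+t<M$, set $u=\lfloor(M-1)/t\rfloor$ and $K=H\cap\{ut,\dots,M-1\}$; then $S^+(s,t,q,N)=S+uS_J+\widehat q\,t\frac{(u-1)u}2+S_K$.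
   Context: Here $r\bmod t$ denotes the representative of $r$ in $\{0,\dots,t-1\}$. *)

From HB Require Import structures.
From mathcomp Require Import all_boot all_order all_algebra.
Set Implicit Arguments. Unset Strict Implicit. Unset Printing Implicit Defensive.
Import Order.TTheory GRing.Theory Num.Theory.
Local Open Scope ring_scope.

Definition Splus (s t q N : nat) : nat := (\sum_(0 <= k < N.+1) ((s + k * t) %/ q))%N.

Definition Mval (s t q N : nat) : nat := ((s + N * t) %/ q)%N.

Definition qbar (t q : nat) : nat := (q %/ t)%N.
Definition qhat (t q : nat) : nat := (q %% t)%N.
Definition shat (s t : nat) : nat := (s %% t)%N.

Definition xM (s t q N : nat) : rat :=
  ((Mval s t q N * q)%:R - s%:R) / t%:R.

Definition Sval (s t q N : nat) : rat :=
  let M : rat := (Mval s t q N)%:R in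
  (qbar t q)%:R * ((M - 1) * M / 2)
  + M * (N%:R - (Num.ceil (xM s t q N))%:~R + 1).

Definition inH (s t q : nat) (k : nat) : bool :=
  (((shat s t)%:Z - (k * qhat t q)%:Z) %% (t%:Z))%Z < (qhat t q)%:Z.

Definition Jseq (s t q : nat) : seq nat := [seq k <- iota 0 t | inH s t q k].
Definition jj (s t q : nat) (i : nat) : nat := nth 0 (Jseq s t q) i.

Definition SH (s t q : nat) (a b : nat) : nat := (\sum_(a <= k < b | inH s t q k) k)%N.

From HB Require Import structures.
From mathcomp Require Import all_boot all_order all_algebra.
From mathcomp Require Import zify ring lra.
Set Implicit Arguments. Unset Strict Implicit. Unset Printing Implicit Defensive.
Import Order.TTheory GRing.Theory Num.Theory.
Local Open Scope ring_scope.

(* Since t < q, the value M = floor((s + N t)/q) grows by at most one when N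
   does.  If it stays put, both S^+ and S grow by M.  If it jumps to M + 1,
   then ceil(x_(M+1)) = N + 1, and ceil(x_M) is obtained from it by
   subtracting floor(q/t) and one more exactly when (s - M q) mod t < q mod t,
   i.e. when M is in H; this defect is the extra term M of the sum over H.
   Hence S^+ = S + sum of the k in H below M.  Finally H is t-periodic with
   exactly q mod t elements j_0 < ... in each period, which turns that sum
   into the four closed forms. *)

Lemma divz_unique (X a r : int) (t : nat) : (0 < t)%N -> 0 <= r < t%:Z ->
  X = a * t%:Z + r -> (X %/ t%:Z)%Z = a.
Proof.
move=> t0 r_bounds ->; rewrite divzMDl; last by rewrite eqz_nat -lt0n.
by rewrite divz_small ?addr0.
Qed.

Lemma divzB_small (X h : int) (t : nat) : (0 < t)%N -> 0 <= h <= t%:Z ->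
  ((X - h) %/ t%:Z)%Z = (X %/ t%:Z)%Z - ((X %% t%:Z)%Z < h)%R%:Z.
Proof.
move=> t0 /andP[h0 ht].
have tn0 : t%:Z != 0 by rewrite eqz_nat -lt0n.
have r0 := modz_ge0 X tn0.
have rt : (X %% t%:Z)%Z < t%:Z by rewrite ltz_pmod // ltz_nat.
have eX := divz_eq X t%:Z.
set a := (X %/ t%:Z)%Z in eX *; set r := (X %% t%:Z)%Z in eX r0 rt *.
case: ltP => hr /=.
- by apply: (@divz_unique _ (a - 1) (r - h + t%:Z)) => //; lia.
- by rewrite subr0; apply: (@divz_unique _ a (r - h)) => //; lia.
Qed.

Lemma ceil_divz (R : archiRealFieldType) (X : int) (t : nat) : (0 < t)%N ->
  Num.ceil (X%:~R / t%:R : R) = - ((- X) %/ t%:Z)%Z.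
Proof.
move=> t0.
have tn0 : t%:Z != 0 by rewrite eqz_nat -lt0n.
have r0 := modz_ge0 (- X) tn0.
have rt : ((- X) %% t%:Z)%Z < t%:Z by rewrite ltz_pmod // ltz_nat.
have eX := divz_eq (- X) t%:Z.
set a := ((- X) %/ t%:Z)%Z in eX *; set r := ((- X) %% t%:Z)%Z in eX r0 rt *.
have tR : (0 : R) < t%:R by rewrite ltr0n.
have -> : X%:~R / t%:R = (- a)%:~R - r%:~R / t%:R :> R.
  rewrite -[X]opprK eX !rmorphN rmorphD rmorphM /= -[t%:Z%:~R]/(t%:R).
  by field; rewrite lt0r_neq0.
have frac0 : (0 : R) <= r%:~R / t%:R by rewrite divr_ge0 ?ler0z ?ler0n.
have frac1 : r%:~R / t%:R < (1 : R).
  by rewrite ltr_pdivrMr // mul1r -[t%:R]/((t%:Z)%:~R : R) ltr_int.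
clearbody a r; apply: ceil_def; rewrite rmorphB /=; lra.
Qed.

Lemma Posz_divn_eq (m d : nat) : m%:Z = (m %/ d)%:Z * d%:Z + (m %% d)%:Z.
Proof. by rewrite -PoszM -PoszD -divn_eq. Qed.

Section ResidueSet.
Variables (s t q : nat).
Hypothesis t_gt0 : (0 < t)%N.

Local Notation qb := (qbar t q).
Local Notation qh := (qhat t q).
Local Notation H := (inH s t q).

Let tZ_neq0 : t%:Z != 0. Proof. by rewrite eqz_nat -lt0n. Qed.
Let qh_bounds : 0 <= qh%:Z <= t%:Z. Proof. by rewrite lez_nat ltnW // ltn_pmod. Qed.

Lemma inH_modz k : H k = (((s%:Z - (k * q)%:Z) %% t%:Z)%Z < qh%:Z).
Proof.
rewrite /inH; congr (_ < _).
have -> : s%:Z - (k * q)%:Z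
    = ((s %/ t)%:Z - k%:Z * qb%:Z) * t%:Z + ((shat s t)%:Z - (k * qh)%:Z).
  by rewrite !PoszM (Posz_divn_eq q t) (Posz_divn_eq s t) /qbar /qhat /shat; ring.
by rewrite modzMDl.
Qed.

Lemma inH_addMn k u : H (k + u * t) = H k.
Proof.
rewrite !inH_modz; congr (_ < _).
have -> : s%:Z - ((k + u * t) * q)%:Z
    = (- (u%:Z * q%:Z)) * t%:Z + (s%:Z - (k * q)%:Z).
  by rewrite !PoszM PoszD PoszM; ring.
by rewrite modzMDl.
Qed.

Lemma inH_modn k : H k = H (k %% t).
Proof. by rewrite {1}(divn_eq k t) addnC inH_addMn. Qed.

Lemma divz_subSq k : ((s%:Z - (k.+1 * q)%:Z) %/ t%:Z)%Z
   = ((s%:Z - (k * q)%:Z) %/ t%:Z)%Z - qb%:Z - (H k)%:Z.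
Proof.
have -> : s%:Z - (k.+1 * q)%:Z
    = (- qb%:Z) * t%:Z + ((s%:Z - (k * q)%:Z) - qh%:Z).
  by rewrite !PoszM -addn1 PoszD (Posz_divn_eq q t) /qbar /qhat; ring.
by rewrite divzMDl // (divzB_small _ t_gt0 qh_bounds) inH_modz; ring.
Qed.

Lemma count_inH_iota n : (((shat s t)%:Z - (n * qh)%:Z) %/ t%:Z)%Z
   = ((shat s t)%:Z %/ t%:Z)%Z - (count H (iota 0 n))%:Z.
Proof.
elim: n => [|n IHn]; first by rewrite mul0n !subr0.
have -> : (shat s t)%:Z - (n.+1 * qh)%:Z = ((shat s t)%:Z - (n * qh)%:Z) - qh%:Z.
  by rewrite !PoszM -addn1 PoszD; ring.
rewrite (divzB_small _ t_gt0 qh_bounds) IHn -addn1 iotaD count_cat /= addn0 PoszD.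
by rewrite /inH; ring.
Qed.

Lemma count_inH_period : count H (iota 0 t) = qh.
Proof.
have := count_inH_iota t.
have -> : (shat s t)%:Z - (t * qh)%:Z = (- qh%:Z) * t%:Z + (shat s t)%:Z.
  by rewrite PoszM; ring.
rewrite divzMDl // => e.
by apply/eqP; rewrite -eqz_nat; apply/eqP; lia.
Qed.

End ResidueSet.

Lemma ceil_sub_div (R : archiRealFieldType) (s t q k : nat) : (0 < t)%N ->
  Num.ceil (((k * q)%:R - s%:R) / t%:R : R) = - ((s%:Z - (k * q)%:Z) %/ t%:Z)%Z.
Proof.
move=> t0; rewrite -[(k * q)%:R]/((k * q)%:Z%:~R : R) -[s%:R]/(s%:Z%:~R : R).
by rewrite -rmorphB ceil_divz // opprB.
Qed.

Lemma SH_nat_recr s t q a b : (a <= b)%N ->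
  SH s t q a b.+1 = (SH s t q a b + inH s t q b * b)%N.
Proof.
move=> ab; rewrite /SH big_mkcond big_nat_recr //= -big_mkcond.
by case: (inH s t q b); rewrite ?mul1n ?mul0n.
Qed.

Section MainIdentity.
Variables (s t q N : nat).
Hypotheses (t_gt0 : (0 < t)%N) (t_lt_q : (t < q)%N).

Local Notation M := (Mval s t q N).

Lemma Mval_succ : Mval s t q N.+1 = M \/ Mval s t q N.+1 = M.+1.
Proof.
have q_gt0 : (0 < q)%N by apply: ltn_trans t_lt_q.
have lo : (M <= Mval s t q N.+1)%N.
  by rewrite leq_div2r // leq_add2l leq_mul2r leqnSn orbT.
have hi : (Mval s t q N.+1 <= M.+1)%N.
  rewrite /Mval -[X in (_ <= X)%N](divnMDl 1) // mul1n leq_div2r // mulSn.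
  lia.
lia.
Qed.

Lemma Sval_succ_stay : Mval s t q N.+1 = M ->
  Sval s t q N.+1 = Sval s t q N + M%:R.
Proof.
move=> eM; rewrite /Sval /xM eM -[N.+1]addn1 natrD.
by set c := Num.ceil _; ring.
Qed.

Lemma Sval_succ_jump : Mval s t q N.+1 = M.+1 ->
  Sval s t q N.+1 + (inH s t q M * M)%:R = Sval s t q N + M.+1%:R.
Proof.
move=> eM.
have q_gt0 : (0 < q)%N by apply: ltn_trans t_lt_q.
have lo : (s + N * t < M.+1 * q)%N by rewrite ltn_ceil.
have hi : (M.+1 * q <= s + N.+1 * t)%N by rewrite -eM leq_divM.
have ceil_next : Num.ceil (((M.+1 * q)%:R - s%:R) / t%:R : rat) = N.+1%:Z.
  rewrite ceil_sub_div // (@divz_unique _ (- N.+1%:Z)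
     (s%:Z + (N.+1 * t)%:Z - (M.+1 * q)%:Z)) ?opprK //; last by ring.
  by apply/andP; split; move: lo hi; rewrite mulSn; lia.
have ceil_cur : Num.ceil (((M * q)%:R - s%:R) / t%:R : rat)
    = N.+1%:Z - (qbar t q)%:Z - (inH s t q M)%:Z.
  by rewrite ceil_sub_div // -[RHS]opprK -ceil_next ceil_sub_div // divz_subSq //; ring.
rewrite /Sval /xM eM ceil_next ceil_cur !rmorphB /= natrM.
rewrite -[M.+1]addn1 -[N.+1]addn1 !natrD.
by field.
Qed.

End MainIdentity.

Lemma Splus_eq_Sval_SH s t q N : (s < q)%N -> (0 < t)%N -> (t < q)%N ->
  (Splus s t q N)%:R = Sval s t q N + (SH s t q 0 (Mval s t q N))%:R :> rat.
Proof.
move=> s_lt_q t_gt0 t_lt_q; elim: N => [|N IHN].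
  rewrite /Splus /Sval /Mval big_nat1 mul0n addn0 divn_small //= /SH big_geq //.
  by rewrite !mul0r mulr0 !add0r.
have -> : Splus s t q N.+1 = (Splus s t q N + Mval s t q N.+1)%N.
  by rewrite /Splus big_nat_recr.
rewrite natrD IHN.
have [eM|eM] := Mval_succ s N t_gt0 t_lt_q.
- by rewrite Sval_succ_stay // eM; ring.
- have := Sval_succ_jump t_gt0 t_lt_q eM.
  by rewrite eM SH_nat_recr // natrD; lra.
Qed.

Section PeriodSums.
Variables (s t q : nat).
Hypothesis t_gt0 : (0 < t)%N.

Local Notation qh := (qhat t q).
Local Notation H := (inH s t q).
Local Notation J := (Jseq s t q).
Local Notation j0 := (jj s t q 0).
Local Notation jl := (jj s t q qh.-1).

Lemma Jseq_sorted : sorted leq J.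
Proof. by rewrite sorted_filter ?iota_sorted //; apply: leq_trans. Qed.

Lemma size_Jseq : size J = qh.
Proof. by rewrite size_filter count_inH_period. Qed.

Lemma mem_Jseq k : (k \in J) = (k < t)%N && H k.
Proof. by rewrite mem_filter mem_iota add0n andbC. Qed.

Lemma inH_period_bounds k : (k < t)%N -> H k -> (j0 <= k <= jl)%N.
Proof.
move=> kt Hk.
have kJ : k \in J by rewrite mem_Jseq kt Hk.
have ik : (index k J < qh)%N by rewrite -size_Jseq index_mem.
have leJ := sorted_leq_nth leq_trans leqnn 0 Jseq_sorted.
rewrite -(nth_index 0 kJ) /jj; move: ik; case qhE: (qhat t q) => [//|n] ik.
by apply/andP; split; apply: leJ; rewrite ?unfold_in /= ?size_Jseq ?qhE.
Qed.

Lemma inH_modn_bounds k : H k -> (j0 <= k %% t <= jl)%N.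
Proof. by move=> Hk; rewrite inH_period_bounds ?ltn_pmod // -inH_modn. Qed.

Lemma SH_eq0 a b : (forall k, (a <= k < b)%N -> ~~ H k) -> SH s t q a b = 0%N.
Proof.
by move=> noH; rewrite /SH big_nat_cond big1 // => k /andP[/noH/negPf->].
Qed.

Lemma SH_cat a b c : (a <= b)%N -> (b <= c)%N ->
  SH s t q a c = (SH s t q a b + SH s t q b c)%N.
Proof. by move=> ab bc; rewrite /SH (big_cat_nat ab bc). Qed.

Lemma SH_period_block u : SH s t q (u * t) (u * t + t) = (SH s t q 0 t + u * t * qh)%N.
Proof.
rewrite /SH -{1}[(u * t)%N]add0n big_addn addKn.
under eq_bigl => i do rewrite inH_addMn.
rewrite big_split /= -big_filter big_const_seq iter_addn_0 big_filter.
by rewrite /index_iota subn0 count_inH_period.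
Qed.

Lemma SH_periods u : (SH s t q 0 (u * t))%:R
  = u%:R * (SH s t q 0 t)%:R + qh%:R * t%:R * ((u%:R - 1) * u%:R / 2) :> rat.
Proof.
elim: u => [|u IHu]; first by rewrite mul0n /SH big_geq //; field.
rewrite mulSnr (SH_cat (leq0n (u * t)) (leq_addr t _)) SH_period_block natrD IHu.
by rewrite !natrD !natrM -addn1 natrD; field.
Qed.

Lemma SH_below_jj0 M : (M <= j0)%N -> SH s t q 0 M = 0%N.
Proof.
move=> Mj0; apply: SH_eq0 => k /andP[_ kM]; apply: contraTN kM => Hk.
have /andP[j0k _] := inH_modn_bounds Hk.
by rewrite -leqNgt (leq_trans Mj0) // (leq_trans j0k) // leq_mod.
Qed.

Lemma SH_one_period M : (jl < M)%N -> (M <= j0 + t)%N -> SH s t q 0 M = SH s t q 0 t.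
Proof.
move=> jlM Mj0t; have [Mt|tM] := leqP M t.
  rewrite (SH_cat (leq0n M) Mt) [X in (_ + X)%N]SH_eq0 ?addn0 // => k.
  case/andP=> Mk kt; apply/negP=> Hk.
  have := inH_modn_bounds Hk; rewrite modn_small //; lia.
rewrite (SH_cat (leq0n t) (ltnW tM)) [X in (_ + X)%N]SH_eq0 ?addn0 // => k.
case/andP=> tk kM; apply/negP=> Hk.
have /andP[j0k _] := inH_modn_bounds Hk.
have : (k %% t + t <= k)%N.
  rewrite {2}(divn_eq k t) addnC leq_add2r.
  by rewrite -[X in (X <= _)%N]mul1n leq_mul2r divn_gt0 // tk orbT.
lia.
Qed.

End PeriodSums.

Theorem theorem9 (s t q N : nat)
  (hs : (s < q)%N) (ht1 : (1 <= t)%N) (htq : (t < q)%N)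
  (hndvd : ~~ (t %| q)%N) (hcop : coprime t q) :
  let M := Mval s t q N in
  let S := Sval s t q N in
  let j0 := jj s t q 0 in
  let jl := jj s t q (qhat t q).-1 in
  let SJ := SH s t q 0 t in
  [/\ (M <= j0)%N -> (Splus s t q N)%:R = S,
      (j0 < M)%N -> (M <= jl)%N -> (Splus s t q N)%:R = S + (SH s t q 0 M)%:R,
      (jl < M)%N -> (M <= j0 + t)%N -> (Splus s t q N)%:R = S + SJ%:R
    & (jl < M)%N -> (j0 + t < M)%N ->
      let u := ((M - 1) %/ t)%N in
      (Splus s t q N)%:R =
        S + u%:R * SJ%:R + (qhat t q)%:R * t%:R * ((u%:R - 1) * u%:R / 2)
          + (SH s t q (u * t) M)%:R :> rat].
Proof.
move=> M S j0 jl SJ.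
have main := Splus_eq_Sval_SH N hs ht1 htq; rewrite -/M -/S in main.
split=> [Mj0 | _ _ | jlM Mj0t | _ _ u]; rewrite main //.
- by rewrite SH_below_jj0 ?addr0.
- by rewrite SH_one_period.
- have uM : (u * t <= M)%N by rewrite (leq_trans (leq_divM _ _)) ?leq_subr.
  by rewrite (SH_cat _ _ _ (leq0n _) uM) natrD SH_periods //; ring.
Qed.
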